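(* For any positive integer $k$, $$\sum_{\substack{n\ge1\\ k\mid n\\ p\mid n\Rightarrow p\mid k}}\frac{\log n}{n}=\frac{1}{\phi(k)}\left(\sum_{p\mid k}\frac{\log p}{p-1}+\log k\right)\asymp\frac{\log k}{\phi(k)}.$$
   Context: $p$ denotes primes, $\phi$ is Euler's function. $A\asymp B$ means $c_1B\le A\le c_2B$ for absolute positive constants $c_1,c_2$. *)

From HB Require Import structures.
From mathcomp Require Import all_boot all_order all_algebra.
From mathcomp Require Import all_classical all_reals all_analysis.
Set Implicit Arguments. Unset Strict Implicit. Unset Printing Implicit Defensive.
Import Order.TTheory GRing.Theory Num.Theory.
Local Open Scope ring_scope.

Definition in_range (k n : nat) : bool :=
  [&& (0 < n)%N, (k %| n)%N & all (fun p => (p %| k)%N) (primes n)].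

Definition summand (R : realType) (k : nat) (n : nat) : R :=
  if in_range k n then ln (n%:R) / n%:R else 0.

Definition closed_form (R : realType) (k : nat) : R :=
  (totient k)%:R^-1 *
  ((\sum_(p <- primes k) ln (p%:R) / (p%:R - 1)) + ln (k%:R)).

From HB Require Import structures.
From mathcomp Require Import all_boot all_order all_algebra.
From mathcomp Require Import all_classical all_reals all_analysis.
From mathcomp Require Import ring lra.
Set Implicit Arguments.
Unset Strict Implicit.
Unset Printing Implicit Defensive.
Import Order.TTheory GRing.Theory Num.Theory.
Import numFieldNormedType.Exports.
Local Open Scope classical_set_scope.
Local Open Scope ring_scope.

(* Write n = k m.  The admissible n correspond to the m > 0 whose prime factors
   all divide k, and these m are exactly the products of prime powers p ^ b over
   the primes p | k, each written once.  Summing the geometric series of the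
   p ^ -b and of the b p ^ -b along this factorisation gives
   sum 1/m = prod_(p | k) p/(p-1) = k/phi(k) and, ln being additive,
   sum ln m / m = (k/phi(k)) sum_(p | k) ln p/(p-1); then ln (k m) = ln k + ln m.
   For the order of magnitude,
   0 <= sum_(p | k) ln p/(p-1) <= sum_(p | k) v_p(k) ln p = ln k. *)

Definition smooth_over (s : seq nat) (m : nat) : bool :=
  (0 < m)%N && all (fun q => q \in s) (primes m).

Lemma smooth_over_nil : [set m | smooth_over [::] m] = [set 1%N].
Proof.
apply/seteqP; split => [[|[|m]] //= /andP[_] | _ ->] //.
by case: (primes m.+2) (primes_eq0 m.+2) => [|q r] //= ->.
Qed.

Lemma smooth_overM s m n :
  smooth_over s (m * n) = smooth_over s m && smooth_over s n.
Proof.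
rewrite /smooth_over muln_gt0.
have [-> | m_gt0] //= := posnP m.
have [-> | n_gt0] /= := posnP n; first by rewrite andbF.
apply/allP/andP => [s_mn | [/allP s_m /allP s_n]].
  by split; apply/allP => q q_mn; apply: s_mn; rewrite primesM // q_mn ?orbT.
by move=> q; rewrite primesM // => /orP[/s_m | /s_n].
Qed.

Lemma smooth_over_sub s t m :
  {subset s <= t} -> smooth_over s m -> smooth_over t m.
Proof.
move=> st /andP[m_gt0 /allP s_m]; rewrite /smooth_over m_gt0.
by apply/allP => q /s_m /st.
Qed.

Lemma smooth_over_primes n : (0 < n)%N -> smooth_over (primes n) n.
Proof. by move=> n_gt0; rewrite /smooth_over n_gt0; apply/allP. Qed.

Lemma smooth_over_pfactor p s b : prime p -> smooth_over (p :: s) (p ^ b).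
Proof.
move=> p_pr; rewrite /smooth_over expn_gt0 prime_gt0 //.
by case: b => [|b] //; rewrite primesX // primes_prime //= inE eqxx.
Qed.

Lemma logn_smooth_over_notin p s m :
  p \notin s -> smooth_over s m -> logn p m = 0%N.
Proof.
move=> p_s /andP[_ /allP s_m]; apply/eqP; rewrite eqn0Ngt logn_gt0.
by apply: contra p_s => /s_m.
Qed.

Lemma smooth_over_cons_bij p s : prime p -> p \notin s ->
  set_bij ([set: nat] `*`` fun=> [set m | smooth_over s m])
          [set m | smooth_over (p :: s) m] (fun bm => p ^ bm.1 * bm.2)%N.
Proof.
move=> p_pr p_s; split.
- move=> [b m] [_ /= s_m]; rewrite /= smooth_overM smooth_over_pfactor //=.
  by apply: smooth_over_sub s_m => q; rewrite inE orbC => ->.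
- move=> [b1 m1] [b2 m2]; rewrite !inE => -[_ /= s_m1] [_ /= s_m2] /= eq_pm.
  have [m1_gt0 m2_gt0] : (0 < m1)%N /\ (0 < m2)%N by case/andP: s_m1; case/andP: s_m2.
  have eq_b : b1 = b2.
    have pb_gt0 b : (0 < p ^ b)%N by rewrite expn_gt0 prime_gt0.
    move: (congr1 (logn p) eq_pm); rewrite !lognM // !pfactorK //.
    by rewrite (logn_smooth_over_notin p_s s_m1) (logn_smooth_over_notin p_s s_m2) !addn0.
  rewrite -eq_b in eq_pm *; move/eqP: eq_pm.
  by rewrite eqn_pmul2l ?expn_gt0 ?prime_gt0 // => /eqP ->.
- move=> m /= s_m; have m_gt0 : (0 < m)%N by case/andP: s_m.
  have [m' p_m' def_m] := pfactor_coprime p_pr m_gt0.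
  exists (logn p m, m'); last by rewrite /= mulnC -def_m.
  split=> //=; move: s_m; rewrite def_m smooth_overM => /andP[/andP[m'_gt0 /allP s_m'] _].
  rewrite /smooth_over m'_gt0; apply/allP => q q_m'; have := s_m' q q_m'.
  rewrite inE => /orP[/eqP q_p | //]; move: q_m'; rewrite q_p mem_primes.
  by rewrite (prime_coprime _ p_pr) in p_m'; rewrite (negPf p_m') !andbF.
Qed.

Lemma in_range_bij k : (0 < k)%N ->
  set_bij [set m | smooth_over (primes k) m] [set n | in_range k n] (muln k).
Proof.
move=> k_gt0.
have in_range_mul m : in_range k (k * m) = smooth_over (primes k) m.
  rewrite /in_range dvdn_mulr //=.
  have -> : all (dvdn^~ k) (primes (k * m)) =
            all (fun q => q \in primes k) (primes (k * m)).
    apply: eq_in_all => q; rewrite mem_primes => /and3P[q_pr _ _].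
    by rewrite /= mem_primes q_pr k_gt0.
  by rewrite -/(smooth_over _ (k * m)) smooth_overM smooth_over_primes.
split.
- by move=> m /=; rewrite in_range_mul.
- by move=> m1 m2 _ _ /eqP; rewrite eqn_pmul2l // => /eqP.
- move=> n /= n_in; have /and3P[_ k_n _] := n_in.
  have def_n : (k * (n %/ k))%N = n by rewrite mulnC divnK.
  by exists (n %/ k)%N; rewrite /= -?in_range_mul def_n.
Qed.

Section LogarithmicSums.
Variable R : realType.
Implicit Types (x y : R) (u : R ^nat).

(* Stated for every n: at n = 0 and n = 1 the junk values ln 0 = 0 and
   x / 0 = 0 make these quotients vanish. *)
Lemma ln_natr_div_ge0 n : 0 <= ln (n%:R : R) / n%:R.
Proof. by case: n => [|n]; rewrite ?invr0 ?mulr0 // divr_ge0 // ln_ge0 // ler1n. Qed.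

Lemma natr_div_subr1_ge0 n : 0 <= (n%:R : R) / (n%:R - 1).
Proof. by case: n => [|n]; rewrite ?mul0r // divr_ge0 // subr_ge0 ler1n. Qed.

Lemma ln_natr_div_subr1_ge0 n : 0 <= ln (n%:R : R) / (n%:R - 1).
Proof.
case: n => [|n]; first by rewrite ln0 ?mul0r.
by rewrite divr_ge0 ?ln_ge0 ?subr_ge0 ?ler1n.
Qed.

Lemma lnM_div x y : 0 < x -> 0 < y ->
  ln (x * y) / (x * y) = ln x / x * y^-1 + x^-1 * (ln y / y).
Proof. by move=> x_gt0 y_gt0; rewrite lnM ?posrE // invfM; ring. Qed.

Lemma ln_prod (I : eqType) (s : seq I) (F : I -> R) :
  (forall i, i \in s -> 0 < F i) ->
  ln (\prod_(i <- s) F i) = \sum_(i <- s) ln (F i).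
Proof.
move=> F_gt0; rewrite big_seq [RHS]big_seq.
apply: (proj2 (big_ind2 (fun a b => 0 < a /\ ln a = b) _ _ _)).
- by rewrite ln1.
- by move=> a1 b1 a2 b2 [a1_gt0 <-] [a2_gt0 <-]; rewrite mulr_gt0 ?lnM.
- by move=> i /F_gt0 Fi_gt0.
Qed.

Lemma ln_prime_decomp k : (0 < k)%N ->
  ln (k%:R : R) = \sum_(p <- primes k) (logn p k)%:R * ln p%:R.
Proof.
move=> k_gt0; rewrite {1}(prod_prime_decomp k_gt0) prime_decompE big_map natr_prod.
rewrite ln_prod => [|p]; last first.
  by rewrite mem_primes => /and3P[p_pr _ _]; rewrite ltr0n expn_gt0 prime_gt0.
rewrite big_seq [RHS]big_seq; apply: eq_bigr => p; rewrite mem_primes => /and3P[p_pr _ _].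
by rewrite /= natrX lnXn ?ltr0n ?prime_gt0 // mulr_natl.
Qed.

Lemma sum_primes_ln_div_le_ln k : (0 < k)%N ->
  \sum_(p <- primes k) ln (p%:R : R) / (p%:R - 1) <= ln k%:R.
Proof.
move=> k_gt0; rewrite ln_prime_decomp // big_seq [leRHS]big_seq.
apply: ler_sum => p; rewrite mem_primes => /and3P[p_pr _ p_k].
have p_ge2 : 2 <= (p%:R : R) by rewrite ler_nat prime_gt1.
have lnp_ge0 : 0 <= ln (p%:R : R) by rewrite ln_ge0 // ler1n prime_gt0.
apply: (@le_trans _ _ (ln p%:R)).
  by rewrite ler_pdivrMr ?ler_peMr //; lra.
by rewrite ler_peMl // ler1n logn_gt0 mem_primes p_pr k_gt0.
Qed.

Lemma prod_primes_totient k : (0 < k)%N ->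
  \prod_(p <- primes k) ((p%:R : R) / (p%:R - 1)) = k%:R / (totient k)%:R.
Proof.
move=> k_gt0; apply: (@mulfI _ (totient k)%:R).
  by rewrite pnatr_eq0 -lt0n totient_gt0.
rewrite [RHS]mulrC divfK ?pnatr_eq0 -?lt0n ?totient_gt0 //.
rewrite [in RHS](prod_prime_decomp k_gt0) prime_decompE big_map totientE //.
rewrite !natr_prod -big_split big_seq [RHS]big_seq /=.
apply: eq_bigr => p; rewrite mem_primes => /and3P[p_pr _ p_k].
have e_gt0 : (0 < logn p k)%N by rewrite logn_gt0 mem_primes p_pr k_gt0.
have p_gt1 : 1 < (p%:R : R) by rewrite ltr1n prime_gt1.
rewrite natrM -subn1 natrB ?prime_gt0 // !natrX -[in RHS](prednK e_gt0) exprS.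
by field; rewrite subr_eq0 gt_eqF.
Qed.

Lemma cvg_series_expr x :
  `|x| < 1 -> series (fun b => x ^+ b) @ \oo --> (1 - x)^-1.
Proof. by move=> /(@cvg_geometric_series _ 1); rewrite mul1r -exprn_geometric. Qed.

Lemma cvg_series_natmul_expr x : 0 <= x < 1 ->
  series (fun b => b%:R * x ^+ b) @ \oo --> x / (1 - x) ^+ 2.
Proof.
case/andP => x_ge0 x_lt1; have x1_gt0 : 0 < 1 - x by rewrite subr_gt0.
set u := fun b => b%:R * x ^+ b; set G := series (fun b => x ^+ b).
have G_cvg : G @ \oo --> (1 - x)^-1 by apply: cvg_series_expr; rewrite ger0_norm.
have G_le n : G n <= (1 - x)^-1.
  rewrite /G exprn_geometric geometric_seriesE ?lt_eqF //= mul1r.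
  by rewrite -[leRHS]mul1r ler_pM2r ?invr_gt0 // lerBlDr lerDl exprn_ge0.
have series_uE n : series u n = (x * G n - u n) / (1 - x).
  apply: (@mulIf _ (1 - x)); rewrite ?gt_eqF // divfK ?gt_eqF // mulrC.
  elim: n => [|n IHn].
    by rewrite /G /u /series /= !big_geq // mul0r !mulr0 subr0.
  rewrite /G (seriesSr u) (seriesSr (fun b => x ^+ b)) -/G mulrDr IHn /u -natr1 exprS.
  ring.
have u_cvg0 : u @ \oo --> 0.
  apply/cvg_series_cvg_0/nondecreasing_is_cvgn.
    by apply: nondecreasing_series => n _ _; rewrite mulr_ge0 ?exprn_ge0.
  exists (x / (1 - x) ^+ 2) => _ [n _ <-]; rewrite series_uE expr2 invfM mulrA.
  rewrite ler_pM2r ?invr_gt0 // (@le_trans _ _ (x * G n)) ?ler_wpM2l //.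
  by rewrite lerBlDr lerDl mulr_ge0 ?exprn_ge0.
rewrite (funext series_uE) expr2 invfM mulrA.
by apply: cvgMr_tmp; rewrite -[X in _ --> X]subr0; apply: cvgB => //; apply: cvgMl_tmp.
Qed.

Lemma cvg_series_esumT u l : (forall n, 0 <= u n) ->
  series u @ \oo --> l <-> \esum_(n in [set: nat]) (u n)%:E = l%:E.
Proof.
move=> u_ge0; rewrite -nneseries_esumT => [|n]; last by rewrite lee_fin.
have EFin_series : (fun n => \sum_(0 <= i < n) (u i)%:E)%E = EFin \o series u.
  by apply/funext => n /=; rewrite sumEFin.
rewrite EFin_series; split => [u_cvg | u_lim].
  by rewrite EFin_lim ?(cvg_lim _ u_cvg) //; apply/cvg_ex; exists l.
have : EFin \o series u @ \oo --> l%:E.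
  by rewrite -u_lim -EFin_series; apply: is_cvg_nneseries => n _ _; rewrite lee_fin.
by move/fine_cvg.
Qed.

Lemma esumZl_nat (P : pred nat) (c : R) (a : nat -> \bar R) :
  0 <= c -> (forall n, (0 <= a n)%E) ->
  (\esum_(n in [set n | P n]) (c%:E * a n) =
   c%:E * \esum_(n in [set n | P n]) a n)%E.
Proof.
move=> c_ge0 a_ge0.
by rewrite -!nneseries_esum ?nneseriesZl // => n _; rewrite ?mule_ge0 ?lee_fin.
Qed.

Lemma esum_nat_lin (P : pred nat) (a b : nat -> R) (c d A B : R) :
  0 <= c -> 0 <= d -> (forall n, 0 <= a n) -> (forall n, 0 <= b n) ->
  \esum_(n in [set n | P n]) (a n)%:E = A%:E ->
  \esum_(n in [set n | P n]) (b n)%:E = B%:E ->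
  \esum_(n in [set n | P n]) (c * a n + d * b n)%:E = (c * A + d * B)%:E.
Proof.
move=> c_ge0 d_ge0 a_ge0 b_ge0 sum_a sum_b.
under eq_esum do rewrite EFinD !EFinM.
rewrite esumD => [|n _|n _]; last 2 first.
- by rewrite -EFinM lee_fin mulr_ge0.
- by rewrite -EFinM lee_fin mulr_ge0.
by rewrite !esumZl_nat ?sum_a ?sum_b // => n; rewrite lee_fin.
Qed.

Lemma esum_smooth_over_cons p s (f : nat -> \bar R) :
  prime p -> p \notin s -> (forall m, (0 <= f m)%E) ->
  \esum_(m in [set m | smooth_over (p :: s) m]) f m =
  \esum_(b in [set: nat]) \esum_(m in [set m | smooth_over s m]) f (p ^ b * m)%N.
Proof.
move=> p_pr p_s f_ge0.
rewrite (reindex_esum _ _ _ _ (smooth_over_cons_bij p_pr p_s)).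
by rewrite (@esum_esum _ _ _ _ _ (fun b m => f (p ^ b * m)%N)).
Qed.

Lemma esum_smooth_over_inv s : uniq s -> all prime s ->
  \esum_(m in [set m | smooth_over s m]) ((m%:R : R)^-1)%:E =
  (\prod_(p <- s) ((p%:R : R) / (p%:R - 1)))%:E.
Proof.
elim: s => [|p s IHs] /=.
  by rewrite smooth_over_nil esum_set1 ?invr1 ?big_nil // lee_fin.
case/andP => p_s s_uniq /andP[p_pr s_pr].
have p_gt1 : 1 < (p%:R : R) by rewrite ltr1n prime_gt1.
set x := (p%:R : R)^-1.
have x_ge0 : 0 <= x by rewrite invr_ge0 ler0n.
have x_lt1 : x < 1 by rewrite invf_lt1 // (lt_trans ltr01).
rewrite big_cons; set A := \prod_(q <- s) _.
have A_ge0 : 0 <= A by apply: prodr_ge0 => q _; apply: natr_div_subr1_ge0.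
rewrite esum_smooth_over_cons //.
transitivity (\esum_(b in [set: nat]) (A * x ^+ b)%:E).
  apply: eq_esum => b _; rewrite mulrC EFinM -IHs // -esumZl_nat ?exprn_ge0 //.
  by apply: eq_esum => m _; rewrite natrM natrX invfM exprVn EFinM.
apply/cvg_series_esumT => [b|]; first by rewrite mulr_ge0 ?exprn_ge0.
have -> : (p%:R : R) / (p%:R - 1) = (1 - x)^-1.
  by rewrite /x; field; rewrite subr_eq0 !gt_eqF // (lt_trans ltr01).
by rewrite mulrC; apply: cvg_geometric_series; rewrite ger0_norm.
Qed.

Lemma esum_smooth_over_ln_div s : uniq s -> all prime s ->
  \esum_(m in [set m | smooth_over s m]) (ln (m%:R : R) / m%:R)%:E =
  (\prod_(p <- s) ((p%:R : R) / (p%:R - 1)) *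
   \sum_(p <- s) ln (p%:R : R) / (p%:R - 1))%:E.
Proof.
elim: s => [|p s IHs] /=.
  by rewrite smooth_over_nil esum_set1 ?ln1 ?mul0r ?big_nil ?mulr0 // lee_fin.
case/andP => p_s s_uniq /andP[p_pr s_pr].
have p_gt1 : 1 < (p%:R : R) by rewrite ltr1n prime_gt1.
have p_gt0 : 0 < (p%:R : R) by rewrite (lt_trans ltr01).
set x := (p%:R : R)^-1.
have x_ge0 : 0 <= x by rewrite invr_ge0 ler0n.
have x_lt1 : x < 1 by rewrite invf_lt1.
have lnp_ge0 : 0 <= ln (p%:R : R) by rewrite ln_ge0 // ltW.
rewrite !big_cons; set A := \prod_(q <- s) _; set S := \sum_(q <- s) _.
have A_ge0 : 0 <= A by apply: prodr_ge0 => q _; apply: natr_div_subr1_ge0.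
have S_ge0 : 0 <= S by apply: sumr_ge0 => q _; apply: ln_natr_div_subr1_ge0.
rewrite esum_smooth_over_cons // => [|m]; last by rewrite lee_fin ln_natr_div_ge0.
transitivity (\esum_(b in [set: nat])
    (ln p%:R * A * (b%:R * x ^+ b) + A * S * x ^+ b)%:E).
  apply: eq_esum => b _.
  have pb_gt0 : 0 < (p%:R : R) ^+ b by rewrite exprn_gt0.
  transitivity (\esum_(m in [set m | smooth_over s m])
      ((b%:R * ln p%:R * x ^+ b) * (m%:R)^-1 + x ^+ b * (ln m%:R / m%:R))%:E).
    apply: eq_esum => m /andP[m_gt0 _].
    rewrite natrM natrX lnM_div ?ltr0n // lnXn // -exprVn -/x -mulr_natl.
    by congr EFin; ring.
  rewrite (esum_nat_lin _ _ _ _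
    (esum_smooth_over_inv s_uniq s_pr) (IHs s_uniq s_pr)).
  - by rewrite -/A -/S; congr EFin; ring.
  - by rewrite !mulr_ge0 ?exprn_ge0.
  - by rewrite exprn_ge0.
  - by move=> m; rewrite invr_ge0.
  - exact: ln_natr_div_ge0.
apply/cvg_series_esumT => [b|].
  by rewrite addr_ge0 // !mulr_ge0 ?exprn_ge0.
have -> : series (fun b => ln p%:R * A * (b%:R * x ^+ b) + A * S * x ^+ b) =
    (fun n => ln p%:R * A * series (fun b => b%:R * x ^+ b) n +
              A * S * series (fun b => x ^+ b) n).
  by apply/funext => n; rewrite /series /= big_split /= -!mulr_sumr.
have -> : (p%:R : R) / (p%:R - 1) * A * (ln p%:R / (p%:R - 1) + S) =
    ln p%:R * A * (x / (1 - x) ^+ 2) + A * S * (1 - x)^-1.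
  by rewrite /x; field; rewrite subr_eq0 !gt_eqF.
apply: cvgD; apply: cvgMl_tmp.
  by apply: cvg_series_natmul_expr; rewrite x_ge0.
by apply: cvg_series_expr; rewrite ger0_norm.
Qed.

Lemma summand_ge0 k n : 0 <= summand R k n.
Proof. by rewrite /summand; case: ifP => // _; apply: ln_natr_div_ge0. Qed.

Lemma esum_summand k : (0 < k)%N ->
  \esum_(n in [set: nat]) (summand R k n)%:E = (closed_form R k)%:E.
Proof.
move=> k_gt0; have k_gt0R : 0 < (k%:R : R) by rewrite ltr0n.
have phi_gt0 : 0 < ((totient k)%:R : R) by rewrite ltr0n totient_gt0.
transitivity (\esum_(n in [set n | in_range k n]) (ln (n%:R : R) / n%:R)%:E).
  rewrite [RHS]esum_mkcond; apply: eq_esum => n _; rewrite /summand.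
  by case: ifPn => n_in; [rewrite mem_set | rewrite memNset //=; apply/negP].
rewrite (reindex_esum _ _ _ _ (in_range_bij k_gt0)).
transitivity (\esum_(m in [set m | smooth_over (primes k) m])
    (ln (k%:R : R) / k%:R * (m%:R)^-1 + k%:R^-1 * (ln m%:R / m%:R))%:E).
  by apply: eq_esum => m /andP[m_gt0 _]; rewrite natrM lnM_div ?ltr0n.
have [uniq_k prime_k] := (primes_uniq k, all_prime_primes k).
rewrite (esum_nat_lin _ _ _ _ (esum_smooth_over_inv uniq_k prime_k)
                              (esum_smooth_over_ln_div uniq_k prime_k)).
- rewrite prod_primes_totient // /closed_form.
  by congr EFin; field; rewrite !gt_eqF.
- exact: ln_natr_div_ge0.
- by rewrite invr_ge0 ltW.
- by move=> m; rewrite invr_ge0.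
- exact: ln_natr_div_ge0.
Qed.

End LogarithmicSums.

Theorem lemma3p3 (R : realType) :
  (forall k : nat, (0 < k)%N ->
     series (summand R k) @ \oo --> closed_form R k) /\
  (exists c1 c2 : R, 0 < c1 /\ 0 < c2 /\
     forall k : nat, (0 < k)%N ->
       c1 * (ln (k%:R) / (totient k)%:R) <= closed_form R k /\
       closed_form R k <= c2 * (ln (k%:R) / (totient k)%:R)).
Proof.
split=> [k k_gt0 | ].
  by apply/cvg_series_esumT; [exact: summand_ge0 | exact: esum_summand].
exists 1, 2; do 2!split=> //; move=> k k_gt0.
have phi_gt0 : 0 < ((totient k)%:R : R) by rewrite ltr0n totient_gt0.
have S_le := sum_primes_ln_div_le_ln R k_gt0.
set S := \sum_(p <- primes k) _ in S_le *.
have S_ge0 : 0 <= S by apply: sumr_ge0 => p _; apply: ln_natr_div_subr1_ge0.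
rewrite /closed_form -/S mul1r mulrA ![_^-1 * _]mulrC.
by split; rewrite ler_pM2r ?invr_gt0 //; lra.
Qed.
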